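(* Let $\mathbb P$ be atomless, $\Lambda\in\mathcal H_I$, and $\overline{\mathbb Q}=\sup_{\mathbb Q\in\mathcal P(\mathbb P,Y_1,Y_2)}\mathbb Q$ (setwise supremum). (i) If $Y_1=0$ and $Y_2$ is nonnegative with $1<\mathbb E^{\mathbb P}(Y_2)<\infty$, then $\overline{\mathbb Q}(A)=1\wedge\mathbb E^{\mathbb P}(Y_2\mathds 1_A)$ for all $A\in\mathcal F$ and $\sup_{\mathbb Q\in\mathcal P(\mathbb P,0,Y_2)}\Lambda\mathrm{VaR}^{\mathbb Q}=\Lambda\mathrm{VaR}^{\overline{\mathbb Q}}$. (ii) If $Y_1=k_1$ and $Y_2=k_2$ are constants with $0\le k_1<1<k_2$, then $\overline{\mathbb Q}(A)=g(\mathbb P(A))$ for all $A\in\mathcal F$ with $g(x)=(k_2x)\wedge(k_1x+1-k_1)$, $x\in[0,1]$, and $\sup_{\mathbb Q\in\mathcal P(\mathbb P,k_1,k_2)}\Lambda\mathrm{VaR}^{\mathbb Q}=(g^{-1}\circ\Lambda)\mathrm{VaR}^{\mathbb P}$.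
   Context: $\mathcal P(\mathbb P,Y_1,Y_2)=\{\mathbb Q\ll\mathbb P: Y_1\le\mathrm d\mathbb Q/\mathrm d\mathbb P\le Y_2\}$. For a capacity $w$ (monotone $w:\mathcal F\to[0,1]$, $w(\emptyset)=0,w(\Omega)=1$) and $\Lambda:\mathbb R\to[0,1]$, $\Lambda\mathrm{VaR}^w(X)=\inf\{x\in\mathbb R:w(X>x)\le\Lambda(x)\}$ ($\inf\emptyset=\infty$). $\mathcal H_I$: increasing functions $\mathbb R\to(0,1)$. In (ii), $g$ is continuous and strictly increasing on the set where $g<1$, and $g^{-1}:(0,1)\to(0,1)$ denotes the inverse there, so $g^{-1}\circ\Lambda$ is well defined. *)

From HB Require Import structures.
From mathcomp Require Import all_boot all_order all_algebra.
From mathcomp Require Import all_classical all_reals all_analysis.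
Set Implicit Arguments. Unset Strict Implicit. Unset Printing Implicit Defensive.
Import Order.TTheory GRing.Theory Num.Theory.
Local Open Scope classical_set_scope.
Local Open Scope ring_scope.
Local Open Scope ereal_scope.

Definition atomless d (T : measurableType d) (R : realType)
  (P : probability T R) : Prop :=
  forall A : set T, measurable A -> 0 < P A ->
    exists B : set T, [/\ measurable B, B `<=` A, 0 < P B & P B < P A].

Definition Pset d (T : measurableType d) (R : realType)
  (P : probability T R) (Y1 Y2 : T -> R) : set (probability T R) :=
  [set Q : probability T R | exists f : T -> R,
     [/\ measurable_fun setT f,
         {ae P, forall x, (Y1 x <= f x <= Y2 x)%R} &
         forall A, measurable A -> Q A = \int[P]_(x in A) (f x)%:E]].

Definition Qbar d (T : measurableType d) (R : realType)
  (P : probability T R) (Y1 Y2 : T -> R) : set T -> \bar R :=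
  fun A => ereal_sup [set (Q : set T -> \bar R) A | Q in Pset P Y1 Y2].

(* Lambda VaR^w (X) = inf { x in R : w(X > x) <= Lambda(x) }, inf of empty = +oo *)
Definition LVaR (T : Type) (R : realType) (Lam : R -> R) (w : set T -> \bar R)
  (X : T -> R) : \bar R :=
  ereal_inf [set x%:E | x in [set x : R | w [set t | (x < X t)%R] <= (Lam x)%:E]].

(* Each Q in P(P, Y1, Y2) with Y1 >= 0 satisfies
   int_A Y1 <= Q(A) <= int_A Y2, besides Q(A) <= 1.  For a fixed event A the
   resulting upper bound (min(1, int_A Y2) in (i),
   g(P(A)) = min(k2 P(A), 1 - k1 P(A^c)) in (ii)) is attained by a density that is a constant
   multiple of Y2, resp. a constant, on A and on its complement: the setwise
   supremum is a maximum, event by event.  As Lambda-VaR^w sees w only through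
   the values w(X > x) and is monotone in w, the supremum of the
   Lambda-VaR^Q is Lambda-VaR of the supremum.  In (ii), g is strictly
   increasing below level 1, so g(P(X > x)) <= Lambda(x) iff
   P(X > x) <= g^-1(Lambda(x)). *)

From HB Require Import structures.
From mathcomp Require Import all_boot all_order all_algebra.
From mathcomp Require Import all_classical all_reals all_analysis.
From mathcomp Require Import measurable_realfun lra.
Set Implicit Arguments. Unset Strict Implicit. Unset Printing Implicit Defensive.
Import Order.TTheory GRing.Theory Num.Theory.
Local Open Scope classical_set_scope.
Local Open Scope ring_scope.

Lemma le_min_affine (R : realFieldType) (k1 k2 p z : R) :
  0 <= k1 -> 0 < k2 -> Num.min (k2 * z) (k1 * z + 1 - k1) < 1 ->
  (Num.min (k2 * p) (k1 * p + 1 - k1) <= Num.min (k2 * z) (k1 * z + 1 - k1))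
  = (p <= z).
Proof.
move=> k1_ge0 k2_gt0; rewrite gt_min => gz_lt1.
have [pz|zp] := leP p z.
  by rewrite le_min !ge_min; apply/andP; split; apply/orP; [left|right]; nra.
apply/negbTE; rewrite -ltNge lt_min !gt_min; apply/andP; split.
  by apply/orP; left; nra.
have [k1_0|k1_neq0] := eqVneq k1 0.
  by move: gz_lt1; rewrite k1_0 !mul0r !subr0 !add0r ltxx orbF => ->.
have k1_gt0 : 0 < k1 by rewrite lt0r k1_neq0.
by apply/orP; right; rewrite !ltrD2r; nra.
Qed.

Local Open Scope ereal_scope.

Section density_probability.
Context d (T : measurableType d) (R : realType) (P : probability T R) (f : T -> R).
Hypotheses (mf : measurable_fun setT f) (f_ge0 : forall t, (0 <= f t)%R).
Hypothesis int_f : \int[P]_t (f t)%:E = 1.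

Definition density_measure (A : set T) := \int[P]_(t in A) (f t)%:E.

Let density_measure0 : density_measure set0 = 0.
Proof. by rewrite /density_measure integral_set0. Qed.

Let density_measure_ge0 A : 0 <= density_measure A.
Proof. by apply: integral_ge0 => t _; rewrite lee_fin. Qed.

Let density_measure_sigma_additive : semi_sigma_additive density_measure.
Proof.
by apply: semi_sigma_additive_nng_induced => //; exact/measurable_EFinP.
Qed.

HB.instance Definition _ := isMeasure.Build _ _ _ density_measure
  density_measure0 density_measure_ge0 density_measure_sigma_additive.

Let density_measureT : density_measure setT = 1. Proof. exact: int_f. Qed.

HB.instance Definition _ :=
  @Measure_isProbability.Build _ _ R density_measure density_measureT.

Lemma density_probability : exists Q : probability T R,
  forall A, measurable A -> Q A = \int[P]_(t in A) (f t)%:E.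
Proof. by exists density_measure. Qed.

End density_probability.

Lemma integral_setU_setC d (T : measurableType d) (R : realType)
    (P : probability T R) (h : T -> R) (A : set T) :
  measurable_fun setT h -> (forall t, (0 <= h t)%R) -> measurable A ->
  \int[P]_t (h t)%:E = \int[P]_(t in A) (h t)%:E + \int[P]_(t in ~` A) (h t)%:E.
Proof.
move=> mh h_ge0 mA; rewrite -{1}(setUv A) ge0_integral_setU //.
- exact: measurableC.
- by rewrite setUv; exact/measurable_EFinP.
- by move=> t _; rewrite lee_fin.
- by apply/disj_setPS => t [].
Qed.

Section nonneg_integrand.
Context d (T : measurableType d) (R : realType) (P : probability T R).
Variable h : T -> R.
Hypotheses (mh : measurable_fun setT h) (h_ge0 : forall t, (0 <= h t)%R).

Let mEh : measurable_fun setT (EFin \o h).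
Proof. exact/measurable_EFinP. Qed.

Lemma integral_fin_setC (I : R) (A : set T) : measurable A ->
  \int[P]_t (h t)%:E = I%:E ->
  exists iA iAc : R, [/\ \int[P]_(t in A) (h t)%:E = iA%:E,
     \int[P]_(t in ~` A) (h t)%:E = iAc%:E, (iA + iAc = I)%R,
     (0 <= iA)%R & (0 <= iAc)%R].
Proof.
move=> mA; rewrite (integral_setU_setC P mh h_ge0 mA).
have iA_ge0 : 0 <= \int[P]_(t in A) (h t)%:E.
  by apply: integral_ge0 => t _; rewrite lee_fin.
have iAc_ge0 : 0 <= \int[P]_(t in ~` A) (h t)%:E.
  by apply: integral_ge0 => t _; rewrite lee_fin.
move: iA_ge0 iAc_ge0.
case: (\int[P]_(t in A) _) => [iA| |]; case: (\int[P]_(t in ~` A) _) => [iAc| |] //.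
by rewrite !lee_fin => iA0 iAc0 [<-]; exists iA, iAc.
Qed.

Lemma Pset_piecewise_density (Y1 Y2 : T -> R) (A : set T) (a b iA iAc : R) :
  measurable A -> (0 <= a)%R -> (0 <= b)%R ->
  \int[P]_(t in A) (h t)%:E = iA%:E -> \int[P]_(t in ~` A) (h t)%:E = iAc%:E ->
  (a * iA + b * iAc = 1)%R ->
  (forall t, A t -> Y1 t <= a * h t <= Y2 t)%R ->
  (forall t, ~ A t -> Y1 t <= b * h t <= Y2 t)%R ->
  exists2 Q : probability T R, Pset P Y1 Y2 Q & Q A = (a * iA)%:E.
Proof.
move=> mA a_ge0 b_ge0 int_A int_Ac mass1 boundsA boundsAc.
pose f t := ((a * \1_A t + b * \1_(~` A) t) * h t)%R.
have mf : measurable_fun setT f.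
  apply: measurable_funM => //; apply: measurable_funD;
    apply: measurable_funM => //; apply: measurable_indic => //.
  exact: measurableC.
have fA t : A t -> f t = (a * h t)%R.
  by move=> At; rewrite /f !indicE mem_set // memNset //= mulr1 mulr0 addr0.
have fAc t : ~ A t -> f t = (b * h t)%R.
  move=> At; rewrite /f !indicE memNset // (mem_set (At : (~` A) t)).
  by rewrite mulr0 mulr1 add0r.
have f_ge0 t : (0 <= f t)%R.
  by have [/fA|/fAc] := pselect (A t) => ->; apply: mulr_ge0.
have int_scaled (B : set T) (c iB : R) : measurable B -> (0 <= c)%R ->
    (forall t, B t -> f t = c * h t)%R -> \int[P]_(t in B) (h t)%:E = iB%:E ->
    \int[P]_(t in B) (f t)%:E = (c * iB)%:E.
  move=> mB c_ge0 fB int_B.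
  rewrite (eq_integral (fun t => c%:E * (h t)%:E)); last first.
    by move=> t; rewrite inE => /fB ->.
  rewrite ge0_integralZl // ?int_B //; first exact: measurable_funS mEh.
  by move=> t _; rewrite lee_fin.
have int_fA := int_scaled A a iA mA a_ge0 fA int_A.
have int_fAc := int_scaled _ b iAc (measurableC mA) b_ge0 fAc int_Ac.
have int_f : \int[P]_t (f t)%:E = 1.
  rewrite (integral_setU_setC P mf f_ge0 mA).
  by rewrite int_fA int_fAc -EFinD mass1.
have [Q QE] := density_probability mf f_ge0 int_f.
exists Q; last by rewrite QE.
exists f; split => //; apply: aeW => t.
by have [At|At] := pselect (A t); [rewrite fA // boundsA | rewrite fAc // boundsAc].
Qed.

End nonneg_integrand.

Lemma Pset_integral_bounds d (T : measurableType d) (R : realType)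
    (P : probability T R) (Y1 Y2 : T -> R) (Q : probability T R) (A : set T) :
  measurable_fun setT Y1 -> measurable_fun setT Y2 ->
  (forall t, 0 <= Y1 t)%R -> (forall t, 0 <= Y2 t)%R ->
  Pset P Y1 Y2 Q -> measurable A ->
  \int[P]_(t in A) (Y1 t)%:E <= Q A <= \int[P]_(t in A) (Y2 t)%:E.
Proof.
move=> mY1 mY2 Y1_ge0 Y2_ge0 [f [mf f_bounds QE]] mA; rewrite QE //.
have mEA (g : T -> R) : measurable_fun setT g -> measurable_fun A (EFin \o g).
  by move=> mg; apply/measurable_EFinP; exact: measurable_funS mg.
(* The density [f] is nonnegative only a.e.: integrate its positive part. *)
pose f_pos t := maxe (f t)%:E 0.
have mf_pos : measurable_fun A f_pos.
  by apply: measurable_maxe => //; exact: mEA.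
have f_pos_ge0 t : A t -> 0 <= f_pos t by rewrite /f_pos le_max lexx orbT.
have -> : \int[P]_(t in A) (f t)%:E = \int[P]_(t in A) f_pos t.
  apply: ae_eq_integral => //; first exact: mEA.
  apply: filterS f_bounds => t /andP[Y1f _] _.
  by rewrite /f_pos max_l // lee_fin (le_trans (Y1_ge0 t)).
apply/andP; split; apply: ae_ge0_le_integral => //; try exact: mEA.
- by move=> t _; rewrite lee_fin.
- apply: filterS f_bounds => t /andP[Y1f _] _.
  by rewrite le_max lee_fin Y1f.
- by move=> t _; rewrite lee_fin.
- apply: filterS f_bounds => t /andP[_ fY2] _.
  by rewrite ge_max !lee_fin fY2 Y2_ge0.
Qed.

Lemma lee_real_lt (R : realType) (v s : \bar R) :
  (forall x : R, x%:E < v -> x%:E <= s) -> v <= s.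
Proof.
move=> below_v; rewrite leNgt; apply/negP => sv.
have [r sr rv] : exists2 r : R, s < r%:E & r%:E < v.
  case: s v sv {below_v} => [s| |] [v| |] //; rewrite ?lte_fin => sv.
  - by exists ((s + v) / 2)%R; rewrite lte_fin; lra.
  - by exists (s + 1)%R; rewrite ?ltry // lte_fin; lra.
  - by exists (v - 1)%R; rewrite ?ltNyr // lte_fin; lra.
  - by exists 0%R; rewrite ?ltry ?ltNyr.
by have := below_v r rv; rewrite leNgt sr.
Qed.

Lemma measurable_superlevel d (T : measurableType d) (R : realType)
    (X : T -> R) (x : R) :
  measurable_fun setT X -> measurable [set t | (x < X t)%R].
Proof.
move=> mX; rewrite -preimage_itvoy -[_ @^-1` _]setTI.
exact: mX (measurable_itv _).
Qed.

Section LVaR_supremum.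
Context d (T : measurableType d) (R : realType) (Lam : R -> R).
Hypothesis Lam_nd : {homo Lam : x y / (x <= y)%R}.

(* [LVaR] only sees a capacity through its values on the superlevel sets of
   [X], and it is monotone in the capacity. *)
Lemma ereal_sup_LVaR (S : set (probability T R)) (w : set T -> \bar R)
    (X : T -> R) :
  measurable_fun setT X ->
  (forall Q x, S Q -> Q [set t | (x < X t)%R] <= w [set t | (x < X t)%R]) ->
  (forall x, exists2 Q, S Q & Q [set t | (x < X t)%R] = w [set t | (x < X t)%R]) ->
  ereal_sup [set LVaR Lam (Q : set T -> \bar R) X | Q in S] = LVaR Lam w X.
Proof.
move=> mX Q_le_w w_attained; apply/eqP; rewrite eq_le; apply/andP; split.
  apply: ge_ereal_sup => _ [Q SQ <-].
  apply: ereal_inf_le_tmp => _ [x wx <-]; exists x => //=.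
  exact: le_trans (Q_le_w _ _ SQ) wx.
apply: lee_real_lt => x0 x0_lt; have [Q SQ Qx0] := w_attained x0.
apply: le_ereal_sup_tmp; exists (LVaR Lam (Q : set T -> \bar R) X).
  by exists Q.
apply: le_ereal_inf_tmp => _ [x Qx <-]; rewrite lee_fin leNgt; apply/negP => xx0.
have Lam_lt_w : (Lam x0)%:E < w [set t | (x0 < X t)%R].
  rewrite ltNge; apply/negP => wx0.
  suff : LVaR Lam w X <= x0%:E by rewrite leNgt x0_lt.
  by apply: ereal_inf_lbound; exists x0.
have Q_mono : Q [set t | (x0 < X t)%R] <= Q [set t | (x < X t)%R].
  apply: le_measure; rewrite ?inE; try exact: measurable_superlevel.
  by move=> t /=; exact: lt_trans.
rewrite Qx0 in Q_mono.
have := lt_le_trans Lam_lt_w (le_trans Q_mono Qx).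
by rewrite lte_fin ltNge Lam_nd // ltW.
Qed.

End LVaR_supremum.

Definition Pset_attained_bound d (T : measurableType d) (R : realType)
    (P : probability T R) (Y1 Y2 : T -> R) (m : set T -> \bar R) :=
  forall A, measurable A ->
    (forall Q, Pset P Y1 Y2 Q -> Q A <= m A) /\
    exists2 Q, Pset P Y1 Y2 Q & Q A = m A.

Section attained_bound.
Context d (T : measurableType d) (R : realType) (P : probability T R).
Variables (Y1 Y2 : T -> R) (m : set T -> \bar R).
Hypothesis m_attained : Pset_attained_bound P Y1 Y2 m.

Lemma Qbar_attained_bound A : measurable A -> Qbar P Y1 Y2 A = m A.
Proof.
move=> mA; have [Q_le_m [Q PsetQ QA]] := m_attained mA.
apply/eqP; rewrite eq_le; apply/andP; split.
  by apply: ge_ereal_sup => _ [Q' PsetQ' <-]; exact: Q_le_m PsetQ'.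
by apply: le_ereal_sup_tmp; exists (Q A); [exists Q | rewrite QA].
Qed.

Lemma ereal_sup_LVaR_Qbar (Lam : R -> R) (X : T -> R) :
  {homo Lam : x y / (x <= y)%R} -> measurable_fun setT X ->
  ereal_sup [set LVaR Lam (Q : set T -> \bar R) X | Q in Pset P Y1 Y2]
  = LVaR Lam (Qbar P Y1 Y2) X.
Proof.
move=> Lam_nd mX; apply: ereal_sup_LVaR => // [Q x PsetQ|x].
  by apply: ereal_sup_ubound; exists Q.
have [_ [Q PsetQ Qx]] := m_attained (measurable_superlevel x mX).
by exists Q; rewrite // Qbar_attained_bound //; exact: measurable_superlevel.
Qed.

End attained_bound.

Section attained_bound_instances.
Context d (T : measurableType d) (R : realType) (P : probability T R).

(* The bound is attained by a density proportional to [Y2] on [A] and on its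
   complement, with both factors in [[0, 1]]. *)
Lemma Pset_attained_bound_dominated (Y2 : T -> R) (I : R) :
  measurable_fun setT Y2 -> (forall t, 0 <= Y2 t)%R ->
  \int[P]_t (Y2 t)%:E = I%:E -> (1 < I)%R ->
  Pset_attained_bound P (fun=> 0%R) Y2
    (fun A => mine 1 (\int[P]_(t in A) (Y2 t)%:E)).
Proof.
move=> mY2 Y2_ge0 int_Y2 I_gt1 A mA.
have [iA [iAc [int_A int_Ac iA_iAc iA_ge0 iAc_ge0]]] :=
  integral_fin_setC mY2 Y2_ge0 mA int_Y2.
rewrite int_A; split.
  move=> Q PsetQ; rewrite le_min probability_le1 //= -int_A.
  have /andP[_ //] := Pset_integral_bounds (measurable_cst _) mY2 (fun=> lexx 0%R)
    Y2_ge0 PsetQ mA.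
have scaled_bounds (c t : R) : (0 <= c <= 1 -> 0 <= t -> 0 <= c * t <= t)%R.
  by move=> /andP[c0 c1] t0; apply/andP; split; nra.
have [iA_ge1|iA_lt1] := leP 1%R iA.
  have iA_gt0 : (0 < iA)%R by lra.
  have inv_iA01 : (0 <= iA^-1 <= 1)%R by rewrite invr_ge0 invf_le1 // ltW.
  have [|||Q PsetQ QA] := Pset_piecewise_density mY2 Y2_ge0 (b := 0%R)
      (Y1 := fun=> 0%R) (Y2 := Y2) mA (proj1 (andP inv_iA01)) (lexx 0%R) int_A int_Ac.
  - by rewrite mulVf ?gt_eqF // mul0r addr0.
  - by move=> t _; apply: scaled_bounds.
  - by move=> t _; rewrite mul0r lexx Y2_ge0.
  by exists Q; rewrite // QA mulVf ?gt_eqF //; apply/esym/min_idPl; rewrite lee_fin.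
have iAc_gt0 : (0 < iAc)%R by lra.
have b01 : (0 <= (1 - iA) / iAc <= 1)%R.
  apply/andP; split; first by apply: divr_ge0; lra.
  by rewrite ler_pdivrMr // mul1r; lra.
have [|||Q PsetQ QA] := Pset_piecewise_density mY2 Y2_ge0 (a := 1%R)
    (Y1 := fun=> 0%R) (Y2 := Y2) mA ler01 (proj1 (andP b01)) int_A int_Ac.
- by rewrite mul1r divfK ?gt_eqF //; lra.
- by move=> t _; rewrite mul1r Y2_ge0 lexx.
- by move=> t _; apply: scaled_bounds.
by exists Q; rewrite // QA mul1r; apply/esym/min_idPr; rewrite lee_fin ltW.
Qed.

Lemma integral_cst_fine (k : R) (B : set T) : measurable B ->
  \int[P]_(t in B) k%:E = (k * fine (P B))%:E.
Proof.
move=> mB; have := integral_cst P mB k%:E; rewrite /cst => ->.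
by rewrite EFinM fineK // fin_num_measure.
Qed.

Lemma Pset_constant_le (k1 k2 : R) (Q : probability T R) (A : set T) :
  (0 <= k1)%R -> (0 <= k2)%R -> Pset P (fun=> k1) (fun=> k2) Q -> measurable A ->
  Q A <= (Num.min (k2 * fine (P A)) (k1 * fine (P A) + 1 - k1))%:E.
Proof.
move=> k1_ge0 k2_ge0 PsetQ mA.
have bounds := Pset_integral_bounds (measurable_cst _) (measurable_cst _)
  (fun=> k1_ge0) (fun=> k2_ge0) PsetQ.
have /andP[_] := bounds A mA; have /andP[+ _] := bounds _ (measurableC mA).
rewrite !integral_cst_fine //; last exact: measurableC.
rewrite probability_setC // -[P A]fineK ?fin_num_measure //= probability_setC //.
rewrite -[Q A]fineK ?fin_num_measure // -EFinB !lee_fin le_min.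
by move=> QAc QA; apply/andP; split; nra.
Qed.

Lemma Pset_attained_bound_constant (k1 k2 : R) :
  (0 <= k1 < 1)%R -> (1 < k2)%R ->
  Pset_attained_bound P (fun=> k1) (fun=> k2)
    (fun A => (Num.min (k2 * fine (P A)) (k1 * fine (P A) + 1 - k1))%:E).
Proof.
move=> /andP[k1_ge0 k1_lt1] k2_gt1 A mA.
have k2_ge0 : (0 <= k2)%R by rewrite ltW // (lt_trans ltr01).
split=> [Q PsetQ|]; first exact: Pset_constant_le.
set p := fine (P A).
have PA : P A = p%:E by rewrite fineK ?fin_num_measure.
have p_ge0 : (0 <= p)%R by rewrite -lee_fin -PA.
have p_le1 : (p <= 1)%R by rewrite -lee_fin -PA probability_le1.
have int1_A : \int[P]_(t in A) ((fun=> 1%R) t)%:E = p%:E.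
  by rewrite integral_cst_fine // mul1r.
have int1_Ac : \int[P]_(t in ~` A) ((fun=> 1%R) t)%:E = (1 - p)%:E.
  by rewrite integral_cst_fine ?mul1r ?probability_setC ?PA //; exact: measurableC.
have [k2p_le|k2p_gt] := leP (k2 * p)%R (k1 * p + 1 - k1)%R.
  have p_lt1 : (p < 1)%R by nra.
  pose b := ((1 - k2 * p) / (1 - p))%R.
  have b_mass : (b * (1 - p) = 1 - k2 * p)%R by rewrite divfK // subr_eq0 gt_eqF.
  have b_bounds : (k1 <= b <= k2)%R by apply/andP; split; nra.
  have [|||Q PsetQ QA] := Pset_piecewise_density (measurable_cst _)
    (fun=> ler01) (Y1 := fun=> k1) (Y2 := fun=> k2) (a := k2) (b := b) mA
    k2_ge0 (le_trans k1_ge0 (proj1 (andP b_bounds))) int1_A int1_Ac.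
  - by rewrite b_mass; lra.
  - by move=> t _; rewrite mulr1 lexx andbT; lra.
  - by move=> t _; rewrite mulr1.
  by exists Q; rewrite // QA.
have p_gt0 : (0 < p)%R by nra.
pose a := ((1 - k1 + k1 * p) / p)%R.
have a_mass : (a * p = 1 - k1 + k1 * p)%R by rewrite divfK // gt_eqF.
have a_bounds : (k1 <= a <= k2)%R by apply/andP; split; nra.
have [|||Q PsetQ QA] := Pset_piecewise_density (measurable_cst _)
  (fun=> ler01) (Y1 := fun=> k1) (Y2 := fun=> k2) (a := a) (b := k1) mA
  (le_trans k1_ge0 (proj1 (andP a_bounds))) k1_ge0 int1_A int1_Ac.
- by rewrite a_mass; lra.
- by move=> t _; rewrite mulr1.
- by move=> t _; rewrite mulr1 lexx /=; lra.
by exists Q; rewrite // QA a_mass; congr EFin; lra.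
Qed.

End attained_bound_instances.

Theorem mainTheorem9 (d : measure_display) (T : measurableType d) (R : realType)
  (P : probability T R) (Lam : R -> R) :
  atomless P ->
  {homo Lam : x y / (x <= y)%R} ->
  (forall x, (0 < Lam x < 1)%R) ->
  (* (i) *)
  (forall Y2 : T -> R, measurable_fun setT Y2 -> (forall t, (0 <= Y2 t)%R) ->
     1 < \int[P]_t (Y2 t)%:E < +oo ->
     (forall A : set T, measurable A ->
        Qbar P (fun=> 0%R) Y2 A = mine 1 (\int[P]_(t in A) (Y2 t)%:E)) /\
     (forall X : T -> R, measurable_fun setT X ->
        ereal_sup [set LVaR Lam (Q : set T -> \bar R) X | Q in Pset P (fun=> 0%R) Y2]
        = LVaR Lam (Qbar P (fun=> 0%R) Y2) X)) /\
  (* (ii) *)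
  (forall (k1 k2 : R) (ginv : R -> R),
     (0 <= k1 < 1)%R -> (1 < k2)%R ->
     let g := fun x : R => Num.min (k2 * x)%R (k1 * x + 1 - k1)%R in
     (* ginv is the inverse of g on the set {x in [0,1] | g x < 1} *)
     (forall y : R, (0 < y < 1)%R -> (0 <= ginv y <= 1)%R /\ g (ginv y) = y) ->
     (forall A : set T, measurable A ->
        Qbar P (fun=> k1) (fun=> k2) A = (g (fine (P A)))%:E) /\
     (forall X : T -> R, measurable_fun setT X ->
        ereal_sup [set LVaR Lam (Q : set T -> \bar R) X | Q in Pset P (fun=> k1) (fun=> k2)]
        = LVaR (ginv \o Lam) (P : set T -> \bar R) X)).
Proof.
move=> _ Lam_nd Lam01; split.
  move=> Y2 mY2 Y2_ge0 /andP[].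
  case int_Y2 : (\int[P]_t (Y2 t)%:E) => [I| |] //; rewrite lte_fin => I_gt1 _.
  have attained := Pset_attained_bound_dominated mY2 Y2_ge0 int_Y2 I_gt1.
  split=> [|X mX]; first exact: Qbar_attained_bound.
  exact: (ereal_sup_LVaR_Qbar attained Lam_nd mX).
move=> k1 k2 ginv k1_01 k2_gt1 g ginvK.
have attained := Pset_attained_bound_constant P k1_01 k2_gt1.
split=> [|X mX]; first exact: Qbar_attained_bound.
rewrite (ereal_sup_LVaR_Qbar attained Lam_nd mX) /LVaR; congr ereal_inf.
congr image; apply/funext => x /=.
have mXx := measurable_superlevel x mX.
rewrite -[P _]fineK ?fin_num_measure // (Qbar_attained_bound attained mXx) !lee_fin.
have [_ gK] := ginvK _ (Lam01 x); rewrite /g in gK.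
rewrite -{1}gK le_min_affine //.
- by case/andP: k1_01.
- exact: lt_trans ltr01 k2_gt1.
- by rewrite gK; case/andP: (Lam01 x).
Qed.
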